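(* Every $q$-Gauss sequence is a $q$-Euler–Gauss sequence.
   Context: $\mu$ is the Möbius function, $[n]_q=1+q+\dots+q^{n-1}$; polynomial congruences modulo $[n]_q$ mean divisibility of the difference by $[n]_q$ in $\mathbb{Z}[q]$. A sequence $(a_n(q))$ in $\mathbb{Z}[q]$ is a $q$-Gauss sequence if $\sum_{d\mid n}\mu(d)a_{n/d}(q^d)\equiv0\pmod{[n]_q}$ for all $n\ge1$; it is a $q$-Euler–Gauss sequence if for all $n\ge1$, $\prod_{d\mid n,\,\mu(d)=1}a_{n/d}(q^d)\equiv\prod_{d\mid n,\,\mu(d)=-1}a_{n/d}(q^d)\pmod{[n]_q}$. *)

From mathcomp Require Import all_boot all_order all_algebra.
Set Implicit Arguments. Unset Strict Implicit. Unset Printing Implicit Defensive.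
Import GRing.Theory.
Local Open Scope ring_scope.

(* Moebius function: mu n = (-1)^k if n is a product of k distinct primes,
   0 if n has a square factor (mu 1 = 1; value at 0 irrelevant). *)
Definition moebius (n : nat) : int :=
  if all (fun p => logn p n == 1%N) (primes n) then (-1) ^+ size (primes n) else 0.

Definition qint (n : nat) : {poly int} := \sum_(i < n) 'X^i.

Definition pcong (m f g : {poly int}) : Prop := exists r : {poly int}, f - g = r * m.

Definition subst_pow (a : nat -> {poly int}) (n d : nat) : {poly int} :=
  a (n %/ d)%N \Po 'X^d.

Definition q_Gauss (a : nat -> {poly int}) : Prop :=
  forall n : nat, (0 < n)%N ->
    pcong (qint n) (\sum_(d <- divisors n) subst_pow a n d *~ moebius d) 0.

Definition q_Euler_Gauss (a : nat -> {poly int}) : Prop :=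
  forall n : nat, (0 < n)%N ->
    pcong (qint n)
      (\prod_(d <- divisors n | moebius d == 1) subst_pow a n d)
      (\prod_(d <- divisors n | moebius d == -1) subst_pow a n d).

From mathcomp Require Import all_boot all_order all_algebra all_field.
Import GRing.Theory.
Local Open Scope ring_scope.
Set Implicit Arguments. Unset Strict Implicit.

(* Since [n]_q is monic and its complex roots are the n-th roots of unity
   x <> 1, both congruences modulo [n]_q amount to identities at each such x.
   Fix x and a prime p with x^m <> 1, where n = p^k m and p does not divide m.
   The squarefree divisors of n are the d and the p d with d | m squarefree,
   and mu(p d) = - mu(d).  Strong induction on n, using the Gauss congruence
   at x, gives a_{n/(pd)}(x^(pd)) = a_{n/d}(x^d) for every d | m; hence the
   factors indexed by mu = 1 and by mu = -1 pair off, d <-> p d, with equal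
   values. *)

Lemma moebius_primeM p d : prime p -> (0 < d)%N -> ~~ (p %| d)%N ->
  moebius (p * d) = - moebius d.
Proof.
move=> p_pr d_gt0 npd; have p_gt0 := prime_gt0 p_pr.
have p_notin_d : p \notin primes d by rewrite mem_primes p_pr d_gt0.
have primes_pd : primes (p * d) =i p :: primes d.
  by move=> q; rewrite primesM // primes_prime // !in_cons in_nil orbF.
have size_primes_pd : size (primes (p * d)) = (size (primes d)).+1.
  rewrite (perm_size (uniq_perm (primes_uniq _) _ primes_pd)) //=.
  by rewrite p_notin_d primes_uniq.
have lognp_d : logn p d = 0%N by apply/eqP; rewrite -leqn0 leqNgt logn_gt0.
rewrite /moebius (eq_all_r primes_pd) size_primes_pd /= lognM // logn_prime //.
rewrite eqxx lognp_d.
rewrite (@eq_in_all _ _ (fun q => logn q d == 1%N)); last first.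
  move=> q q_d; rewrite lognM // logn_prime //.
  by case: (eqVneq q p) => [qp|//]; rewrite -qp q_d in p_notin_d.
by case: all; rewrite ?oppr0 // exprS mulN1r.
Qed.

Lemma moebius_primeM_dvd p d : prime p -> (0 < d)%N -> (p %| d)%N ->
  moebius (p * d) = 0.
Proof.
move=> p_pr d_gt0 pd; have p_gt0 := prime_gt0 p_pr.
rewrite /moebius; case: ifP => // /allP /(_ p).
rewrite mem_primes p_pr muln_gt0 p_gt0 d_gt0 dvdn_mulr //= lognM // logn_prime //.
have : (0 < logn p d)%N by rewrite logn_gt0 mem_primes p_pr d_gt0 pd.
by rewrite eqxx; case: (logn p d) => // l _ /(_ isT); rewrite addnS.
Qed.

Lemma moebius_primeM_eq0 p d : prime p -> (0 < d)%N ->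
  (moebius (p * d) != 0) = ~~ (p %| d)%N && (moebius d != 0).
Proof.
move=> p_pr d_gt0; have [pd|npd] := boolP (p %| d)%N.
  by rewrite moebius_primeM_dvd ?eqxx.
by rewrite moebius_primeM // oppr_eq0.
Qed.

Lemma coprime_prime_gt0 p m : prime p -> coprime p m -> (0 < m)%N.
Proof.
by case: m => // p_pr; rewrite /coprime gcdn0 => /eqP p1; rewrite p1 in p_pr.
Qed.

Lemma moebius_primeM_coprime p m d : prime p -> coprime p m -> (d %| m)%N ->
  moebius (p * d) = - moebius d.
Proof.
move=> p_pr p_m d_m; have m_gt0 := coprime_prime_gt0 p_pr p_m.
rewrite moebius_primeM ?(dvdn_gt0 m_gt0) //.
by apply: contraL p_m => p_d; rewrite prime_coprime // negbK (dvdn_trans p_d d_m).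
Qed.

Definition sqfree_divisors n := [seq d <- divisors n | moebius d != 0].

Lemma mem_sqfree_divisors n d : (0 < n)%N ->
  (d \in sqfree_divisors n) = (d %| n)%N && (moebius d != 0).
Proof. by move=> n_gt0; rewrite mem_filter -dvdn_divisors // andbC. Qed.

Lemma sqfree_divisors_uniq n : uniq (sqfree_divisors n).
Proof. exact/filter_uniq/divisors_uniq. Qed.

Lemma big_sqfree_divisors_moebius (T : Type) (idx : T) (op : T -> T -> T) n c F :
  c != 0 -> \big[op/idx]_(d <- divisors n | moebius d == c) F d =
            \big[op/idx]_(d <- sqfree_divisors n | moebius d == c) F d.
Proof.
move=> c_neq0; rewrite big_filter_cond; apply: eq_bigl => d.
by case: (eqVneq (moebius d) c) => [->|]; rewrite ?c_neq0 ?andbF.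
Qed.

Lemma perm_sqfree_divisors_pXM p k m : prime p -> (0 < k)%N -> coprime p m ->
  perm_eq (sqfree_divisors (p ^ k * m))
          (sqfree_divisors m ++ map (muln p) (sqfree_divisors m)).
Proof.
move=> p_pr k_gt0 p_m; have p_gt0 := prime_gt0 p_pr.
have m_gt0 := coprime_prime_gt0 p_pr p_m.
have n_gt0 : (0 < p ^ k * m)%N by rewrite muln_gt0 expn_gt0 p_gt0.
have mulp_inj : injective (muln p) by move=> a b /eqP; rewrite eqn_pmul2l // => /eqP.
have ndvd_m x : (p %| x)%N -> (x %| m)%N = false.
  by move=> px; apply: contraTF p_m => /(dvdn_trans px); rewrite prime_coprime // => ->.
have coprime_pX x e : ~~ (p %| x)%N -> coprime x (p ^ e).
  by move=> npx; rewrite coprime_sym coprimeXl // prime_coprime.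
apply: uniq_perm; first exact: sqfree_divisors_uniq.
  rewrite cat_uniq (map_inj_uniq mulp_inj) !sqfree_divisors_uniq andbT /=.
  apply/hasPn => _ /mapP [y _ ->].
  by rewrite mem_sqfree_divisors // ndvd_m // dvdn_mulr.
move=> x; rewrite mem_cat !mem_sqfree_divisors //.
have [/dvdnP [y ->]|npx] := boolP (p %| x)%N; last first.
  have -> : (x \in map (muln p) (sqfree_divisors m)) = false.
    by apply/negbTE/mapP => -[y _ xE]; rewrite xE dvdn_mulr in npx.
  by rewrite orbF Gauss_dvdr ?coprime_pX.
rewrite mulnC (mem_map mulp_inj) mem_sqfree_divisors //.
rewrite (ndvd_m _ (dvdn_mulr y (dvdnn p))) /=.
have [->|y_gt0] := posnP y; first by rewrite muln0 !dvd0n !gtn_eqF.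
rewrite moebius_primeM_eq0 //; have [py|npy] := boolP (p %| y)%N.
  by rewrite ndvd_m ?andbF.
by rewrite -(prednK k_gt0) expnS -mulnA dvdn_pmul2l // Gauss_dvdr ?coprime_pX.
Qed.

Lemma exists_prime_ndvdn_mul_p'part n j : (0 < n)%N -> ~~ (n %| j)%N ->
  exists2 p, p \in primes n & ~~ (n %| j * n`_p^')%N.
Proof.
move=> n_gt0 n_j.
have /hasP [p p_n np_j] : has (fun p : nat => ~~ (n`_p %| j)%N) (primes n).
  apply: contraR n_j => /hasPn np_j; apply/dvdn_partP => // p /np_j.
  by rewrite negbK.
by exists p => //; rewrite -{1}(partnC p n_gt0) dvdn_pmul2r ?part_gt0.
Qed.

(* A notation rather than a definition, so that the ring-morphism lemmas
   apply to [evalz x] directly. *)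
Notation evalz x := (horner_morph (fun c : int => mulrC x c%:~R)).

Lemma evalz_subst_pow (R : comNzRingType) (x : R) a n d :
  evalz x (subst_pow a n d) = evalz (x ^+ d) (a (n %/ d)%N).
Proof. by rewrite /horner_morph map_comp_poly map_polyXn horner_comp hornerXn. Qed.

Lemma evalz_qint (R : idomainType) (x : R) n : x ^+ n = 1 -> x != 1 ->
  evalz x (qint n) = 0.
Proof.
move=> xn1 x_neq1; have : (x - 1) * \sum_(i < n) x ^+ i = 0.
  by rewrite -subrX1 xn1 subrr.
move/eqP; rewrite mulf_eq0 subr_eq0 (negbTE x_neq1) => /eqP <-.
by rewrite /qint rmorph_sum; apply: eq_bigr => i _; rewrite rmorphXn /= horner_morphX.
Qed.

Lemma qint_poly n : qint n = \poly_(i < n) 1.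
Proof. by rewrite poly_def; apply: eq_bigr => i _; rewrite scale1r. Qed.

Lemma qint_monic n : (0 < n)%N -> qint n \is monic.
Proof. by move=> n_gt0; rewrite qint_poly monicE lead_coef_poly ?oner_neq0. Qed.

Lemma size_qint n : size (qint n) = n.
Proof.
case: n => [|n]; first by rewrite /qint big_ord0 size_poly0.
by rewrite qint_poly size_poly_eq ?oner_neq0.
Qed.

Section RootsOfUnity.
Import Pdiv.CommonRing Pdiv.RingMonic.

Variables (R : numDomainType) (n : nat) (z : R).
Hypotheses (n_gt0 : (0 < n)%N) (z_prim : n.-primitive_root z).

Lemma prim_root_expr_nontrivial k : (0 < k < n)%N -> (z ^+ k) ^+ n = 1 /\ z ^+ k != 1.
Proof.
case/andP=> k_gt0 k_lt_n; split.
  by rewrite -exprM mulnC exprM (prim_expr_order z_prim) expr1n.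
by rewrite -(prim_order_dvd z_prim) gtnNdvd.
Qed.

Lemma poly_vanishing_roots_unity_eq0 (r : {poly int}) : (size r < n)%N ->
  (forall k, (0 < k < n)%N -> evalz (z ^+ k) r = 0) -> r = 0.
Proof.
move=> size_r r_roots; apply/eqP; apply: contraTT size_r => r_neq0.
have size_rR : size (map_poly intr r : {poly R}) = size r.
  by apply: size_map_inj_poly; [exact: intr_inj | rewrite rmorph0].
rewrite -leqNgt -size_rR -(prednK n_gt0) -(size_iota 1 n.-1) -(size_map (GRing.exp z)).
apply: max_poly_roots; first by rewrite -size_poly_eq0 size_rR size_poly_eq0.
  apply/allP => y /mapP [k]; rewrite mem_iota add1n prednK // => k_range ->.
  by apply/eqP; exact: r_roots.
rewrite map_inj_in_uniq ?iota_uniq // => i j.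
rewrite !mem_iota !add1n prednK // => /andP [_ i_lt_n] /andP [_ j_lt_n] /eqP.
by rewrite (eq_prim_root_expr z_prim) !modn_small // => /eqP.
Qed.

Lemma pcong_qint_eval f g :
  (forall k, (0 < k < n)%N -> evalz (z ^+ k) f = evalz (z ^+ k) g) ->
  pcong (qint n) f g.
Proof.
move=> fg; have qn_monic := qint_monic n_gt0.
exists (rdivp (f - g) (qint n)); set h := f - g.
rewrite {1}(rdivp_eq qn_monic h) [X in _ + X](_ : _ = 0) ?addr0 //.
apply: poly_vanishing_roots_unity_eq0.
  by rewrite -[X in (_ < X)%N]size_qint ltn_rmodpN0 // monic_neq0.
move=> k k_range; have [zk_n zk_neq1] := prim_root_expr_nontrivial k_range.
have -> : rmodp h (qint n) = h - rdivp h (qint n) * qint n.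
  by rewrite {2}(rdivp_eq qn_monic h) addrAC subrr add0r.
by rewrite rmorphB rmorphM /= evalz_qint // mulr0 subr0 rmorphB /= fg // subrr.
Qed.

End RootsOfUnity.

Section GaussSequenceAtRootsOfUnity.

Variables (R : idomainType) (a : nat -> {poly int}) (p k : nat).
Hypotheses (a_Gauss : q_Gauss a) (p_pr : prime p) (k_gt0 : (0 < k)%N).

Lemma q_Gauss_eval N (x : R) : (0 < N)%N -> x ^+ N = 1 -> x != 1 ->
  \sum_(d <- sqfree_divisors N) evalz x (subst_pow a N d) *~ moebius d = 0.
Proof.
move=> N_gt0 xN x_neq1; have [r Er] := a_Gauss N_gt0.
have := congr1 (evalz x) Er; rewrite subr0 rmorphM /= evalz_qint // mulr0.
rewrite rmorph_sum => sum_eq0; rewrite -[RHS]sum_eq0 big_filter big_mkcond.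
by apply: eq_bigr => d _; rewrite rmorphMz; case: eqP => [->|].
Qed.

Lemma q_Gauss_eval_pM N m (x : R) : coprime p m -> N = (p ^ k * m)%N ->
  x ^+ N = 1 -> x ^+ m != 1 -> forall d, (d %| m)%N ->
  evalz x (subst_pow a N (p * d)) = evalz x (subst_pow a N d).
Proof.
elim/ltn_ind: N m x => N IH m x p_m NE xN xm.
have m_gt0 := coprime_prime_gt0 p_pr p_m.
have N_gt0 : (0 < N)%N by rewrite NE muln_gt0 expn_gt0 prime_gt0.
have x_neq1 : x != 1 by apply: contraNneq xm => ->; rewrite expr1n.
have pair d : (d %| m)%N -> d != 1%N ->
    evalz x (subst_pow a N (p * d)) = evalz x (subst_pow a N d).
  move=> d_m d_neq1; have d_gt0 := dvdn_gt0 m_gt0 d_m.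
  have d_N : (d %| N)%N by rewrite NE dvdn_mull.
  have xd_pow e : (d %| e)%N -> (x ^+ d) ^+ (e %/ d) = x ^+ e.
    by move=> d_e; rewrite -exprM mulnC divnK.
  have := IH (N %/ d)%N _ (m %/ d)%N (x ^+ d) _ _ _ _ 1%N (dvd1n _).
  rewrite !evalz_subst_pow muln1 divn1 expr1 [(p * d)%N]mulnC exprM divnMA => -> //.
  - by rewrite ltn_Pdiv // ltn_neqAle eq_sym d_neq1.
  - exact: coprime_dvdr (dvdn_div d_m) p_m.
  - by rewrite NE muln_divA.
  - by rewrite xd_pow.
  - by rewrite xd_pow.
have split_N := perm_sqfree_divisors_pXM p_pr k_gt0 p_m; rewrite -NE in split_N.
have pair1 : evalz x (subst_pow a N (p * 1)) = evalz x (subst_pow a N 1).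
  have := q_Gauss_eval N_gt0 xN x_neq1.
  rewrite (perm_big _ split_N) big_cat big_map /= -big_split /=.
  rewrite (bigD1_seq 1%N) ?sqfree_divisors_uniq ?mem_sqfree_divisors ?dvd1n //=.
  rewrite big1_seq ?addr0 => [|d /andP [d_neq1]]; last first.
    rewrite mem_sqfree_divisors // => /andP [d_m _].
    by rewrite (moebius_primeM_coprime p_pr p_m) // pair // mulrNz addrN.
  rewrite (moebius_primeM_coprime p_pr p_m) ?dvd1n // mulrNz => /eqP.
  by rewrite subr_eq0 => /eqP.
by move=> d d_m; have [->|] := eqVneq d 1%N; [exact: pair1 | exact: pair].
Qed.

Lemma q_Euler_Gauss_eval n m (x : R) : coprime p m -> n = (p ^ k * m)%N ->
  x ^+ n = 1 -> x ^+ m != 1 ->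
  evalz x (\prod_(d <- divisors n | moebius d == 1) subst_pow a n d) =
  evalz x (\prod_(d <- divisors n | moebius d == -1) subst_pow a n d).
Proof.
move=> p_m nE xn xm; have m_gt0 := coprime_prime_gt0 p_pr p_m.
have split_n := perm_sqfree_divisors_pXM p_pr k_gt0 p_m; rewrite -nE in split_n.
have prod_pM c :
    \prod_(d <- sqfree_divisors m | moebius (p * d) == c)
      evalz x (subst_pow a n (p * d)) =
    \prod_(d <- sqfree_divisors m | moebius d == - c)
      evalz x (subst_pow a n d).
  rewrite big_seq_cond [RHS]big_seq_cond.
  apply: eq_big => [d | d /andP [+ _]]; rewrite mem_sqfree_divisors //.
    case d_m: (d %| m)%N => //=.
    by rewrite (moebius_primeM_coprime p_pr p_m) // eqr_oppLR.
  by case/andP=> d_m _; apply: q_Gauss_eval_pM p_m nE xn xm d d_m.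
rewrite !rmorph_prod /= !big_sqfree_divisors_moebius ?oppr_eq0 ?oner_eq0 //.
by rewrite !(perm_big _ split_n) !big_cat !big_map /= !prod_pM opprK mulrC.
Qed.

End GaussSequenceAtRootsOfUnity.

Theorem theorem5 (a : nat -> {poly int}) : q_Gauss a -> q_Euler_Gauss a.
Proof.
move=> a_Gauss n n_gt0; have [z z_prim] := C_prim_root_exists n_gt0.
apply: (pcong_qint_eval n_gt0 z_prim) => j /andP [j_gt0 j_lt_n].
have [p p_n n_jm] := exists_prime_ndvdn_mul_p'part n_gt0 (negbT (gtnNdvd j_gt0 j_lt_n)).
have p_pr : prime p by move: p_n; rewrite mem_primes => /andP [].
have k_gt0 : (0 < logn p n)%N by rewrite logn_gt0.
apply: (q_Euler_Gauss_eval a_Gauss p_pr k_gt0 (m := n`_p^')).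
- exact: (pnat_coprime (pnat_id p_pr) (part_pnat _ _)).
- by rewrite -p_part partnC.
- by rewrite -exprM mulnC exprM (prim_expr_order z_prim) expr1n.
- by rewrite -exprM -(prim_order_dvd z_prim).
Qed.
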